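(* Let $P_1,\dots,P_5$ be any five points in the plane, with indices taken mod $5$. Define the following oriented areas: - $t_i=(P_{i-1}P_iP_{i+1})$ for $i=1,\dots,5$; - $A$, the oriented area of the closed polygon $P_1P_2P_3P_4P_5$; - $A'$, the oriented area of the closed (star) polygon $P_1P_3P_5P_2P_4$; - $t'_1=(P_4P_1P_3)$, $t'_3=(P_1P_3P_5)$, $t'_5=(P_3P_5P_2)$, $t'_2=(P_5P_2P_4)$, $t'_4=(P_2P_4P_1)$. Set $$c_1=\sum_{i=1}^5 t_i,\qquad c_2=t_1t_2+t_2t_3+t_3t_4+t_4t_5+t_5t_1,$$ $$c_1'=\sum_{i=1}^5 t'_i,\qquad c_2'=t'_1t'_3+t'_3t'_5+t'_5t'_2+t'_2t'_4+t'_4t'_1.$$ Then $$c_1=2A-A',\quad c_2=A(A-A'),\quad c_1'=2A'+A,\quad c_2'=A'(A+A'),$$ and consequently $$A^2-c_1A+c_2=0,\qquad A'^2-c_1^2+4c_2=0,\qquad A^2-c_1'^2+4c_2'=0,\qquad A'^2-c_1'A'+c_2'=0.$$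
   Context: For points $X,Y,Z$ in the plane, the oriented area is $(XYZ)=\tfrac12\det(Y-X,\,Z-X)$. The oriented area of a closed polygon $Q_1Q_2\cdots Q_m$ with $Q_j=(x_j,y_j)$ is $\tfrac12\sum_{j=1}^m (x_jy_{j+1}-x_{j+1}y_j)$, with indices mod $m$. The $t'_i$ are the oriented areas of the vertex triangles of the star pentagon $P_1P_3P_5P_2P_4$. *)

From HB Require Import structures.
From mathcomp Require Import all_boot all_order all_algebra.
Set Implicit Arguments. Unset Strict Implicit. Unset Printing Implicit Defensive.
Import Order.TTheory GRing.Theory Num.Theory.
Local Open Scope ring_scope.

Definition pt (R : realFieldType) := (R * R)%type.

Definition det2 (R : realFieldType) (u v : pt R) : R := u.1 * v.2 - u.2 * v.1.

Definition tri_area (R : realFieldType) (X Y Z : pt R) : R :=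
  (det2 (Y.1 - X.1, Y.2 - X.2) (Z.1 - X.1, Z.2 - X.2)) / 2.

Definition poly_area (R : realFieldType) (Q : seq (pt R)) : R :=
  (\sum_(j < size Q)
     ((nth (0,0) Q j).1 * (nth (0,0) Q ((j.+1) %% size Q)).2
      - (nth (0,0) Q ((j.+1) %% size Q)).1 * (nth (0,0) Q j).2)) / 2.

From HB Require Import structures.
From mathcomp Require Import all_boot all_order all_algebra.
From mathcomp Require Import ring.
Set Implicit Arguments. Unset Strict Implicit. Unset Printing Implicit Defensive.
Import Order.TTheory GRing.Theory Num.Theory.
Local Open Scope ring_scope.

(* Writing [d X Y] for [det2 X Y], twice a triangle area is [d X Y + d Y Z + d Z X], so the
   five vertex triangles together count each side of the pentagon twice and each diagonal
   once, oriented against the pentagram: [c1 = 2A - A'].  The quartic identity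
   [c2 = A (A - A')] is checked in coordinates.  Together they say that [A] is a root of
   [X^2 - c1 X + c2] with discriminant [A'^2].  The primed identities are the same
   statement for the star pentagon [P1 P3 P5 P2 P4], whose vertex triangles are the [t'_i]
   and whose own star is the reversed pentagon, of area [-A]. *)

Lemma quadratic_root_discriminant (F : comPzRingType) (a b c1 c2 : F) :
  c1 = 2 * a - b -> c2 = a * (a - b) ->
  a ^+ 2 - c1 * a + c2 = 0 /\ b ^+ 2 - c1 ^+ 2 + 4 * c2 = 0.
Proof. by move=> -> ->; split; ring. Qed.

Section Pentagon.

Variable R : realFieldType.
Implicit Types X Y Z : pt R.

Lemma det2C X Y : det2 Y X = - det2 X Y.
Proof. by rewrite /det2; ring. Qed.

Lemma tri_area_det2 X Y Z : tri_area X Y Z = (det2 X Y + det2 Y Z + det2 Z X) / 2.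
Proof. by case: X Y Z => [x1 x2] [y1 y2] [z1 z2]; rewrite /tri_area /det2 /=; ring. Qed.

Lemma poly_area5 (P1 P2 P3 P4 P5 : pt R) :
  poly_area [:: P1; P2; P3; P4; P5]
  = (det2 P1 P2 + det2 P2 P3 + det2 P3 P4 + det2 P4 P5 + det2 P5 P1) / 2.
Proof. by rewrite /poly_area !big_ord_recl big_ord0 /bump /= /det2; ring. Qed.

Definition pentagon_c1 (P1 P2 P3 P4 P5 : pt R) : R :=
  tri_area P5 P1 P2 + tri_area P1 P2 P3 + tri_area P2 P3 P4
  + tri_area P3 P4 P5 + tri_area P4 P5 P1.

Definition pentagon_c2 (P1 P2 P3 P4 P5 : pt R) : R :=
  tri_area P5 P1 P2 * tri_area P1 P2 P3 + tri_area P1 P2 P3 * tri_area P2 P3 P4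
  + tri_area P2 P3 P4 * tri_area P3 P4 P5 + tri_area P3 P4 P5 * tri_area P4 P5 P1
  + tri_area P4 P5 P1 * tri_area P5 P1 P2.

Definition pentagram_area (P1 P2 P3 P4 P5 : pt R) : R := poly_area [:: P1; P3; P5; P2; P4].

Lemma pentagram_areaK (P1 P2 P3 P4 P5 : pt R) :
  pentagram_area P1 P3 P5 P2 P4 = - poly_area [:: P1; P2; P3; P4; P5].
Proof.
rewrite /pentagram_area !poly_area5.
by rewrite (det2C P5 P1) (det2C P4 P5) (det2C P3 P4) (det2C P2 P3) (det2C P1 P2); ring.
Qed.

Lemma pentagon_c1E (P1 P2 P3 P4 P5 : pt R) :
  pentagon_c1 P1 P2 P3 P4 P5
  = 2 * poly_area [:: P1; P2; P3; P4; P5] - pentagram_area P1 P2 P3 P4 P5.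
Proof.
rewrite /pentagon_c1 /pentagram_area !tri_area_det2 !poly_area5.
by rewrite (det2C P4 P2) (det2C P5 P3) (det2C P1 P4) (det2C P2 P5) (det2C P3 P1); ring.
Qed.

Lemma pentagon_c2E (P1 P2 P3 P4 P5 : pt R) :
  pentagon_c2 P1 P2 P3 P4 P5 = poly_area [:: P1; P2; P3; P4; P5]
    * (poly_area [:: P1; P2; P3; P4; P5] - pentagram_area P1 P2 P3 P4 P5).
Proof.
case: P1 P2 P3 P4 P5 => [x1 y1] [x2 y2] [x3 y3] [x4 y4] [x5 y5].
by rewrite /pentagon_c2 /pentagram_area !poly_area5 /tri_area /det2 /=; ring.
Qed.

End Pentagon.

Theorem theorem2 (R : realFieldType) (P1 P2 P3 P4 P5 : pt R) :
  let t1 := tri_area P5 P1 P2 in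
  let t2 := tri_area P1 P2 P3 in
  let t3 := tri_area P2 P3 P4 in
  let t4 := tri_area P3 P4 P5 in
  let t5 := tri_area P4 P5 P1 in
  let A := poly_area [:: P1; P2; P3; P4; P5] in
  let A' := poly_area [:: P1; P3; P5; P2; P4] in
  let t'1 := tri_area P4 P1 P3 in
  let t'3 := tri_area P1 P3 P5 in
  let t'5 := tri_area P3 P5 P2 in
  let t'2 := tri_area P5 P2 P4 in
  let t'4 := tri_area P2 P4 P1 in
  let c1 := t1 + t2 + t3 + t4 + t5 in
  let c2 := t1 * t2 + t2 * t3 + t3 * t4 + t4 * t5 + t5 * t1 in
  let c1' := t'1 + t'2 + t'3 + t'4 + t'5 in
  let c2' := t'1 * t'3 + t'3 * t'5 + t'5 * t'2 + t'2 * t'4 + t'4 * t'1 in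
  [/\ c1 = 2 * A - A', c2 = A * (A - A'), c1' = 2 * A' + A & c2' = A' * (A + A')]
  /\ [/\ A ^+ 2 - c1 * A + c2 = 0, A' ^+ 2 - c1 ^+ 2 + 4 * c2 = 0,
         A ^+ 2 - c1' ^+ 2 + 4 * c2' = 0 & A' ^+ 2 - c1' * A' + c2' = 0].
Proof.
move=> /=.
have c1E := pentagon_c1E P1 P2 P3 P4 P5.
have c2E := pentagon_c2E P1 P2 P3 P4 P5.
have c1'E := pentagon_c1E P1 P3 P5 P2 P4.
have c2'E := pentagon_c2E P1 P3 P5 P2 P4.
have [rootA discrA] := quadratic_root_discriminant c1E c2E.
have [rootA' discrA'] := quadratic_root_discriminant c1'E c2'E.
rewrite pentagram_areaK ?opprK ?sqrrN in c1'E c2'E discrA'.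
have -> : tri_area P4 P1 P3 + tri_area P5 P2 P4 + tri_area P1 P3 P5
          + tri_area P2 P4 P1 + tri_area P3 P5 P2 = pentagon_c1 P1 P3 P5 P2 P4.
  by rewrite /pentagon_c1; ring.
rewrite (addrC (poly_area [:: P1; P3; P5; P2; P4])) in c2'E.
by split; split.
Qed.
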